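(* Let $K$ be a field, let $R_1,\dots,R_m$ be disjoint nonempty sets with $\bigcup_{k=1}^m R_k=\{1,\dots,n\}$, and let $\vec a_{0,1},\dots,\vec a_{0,n},\vec a_{1,1},\dots,\vec a_{1,n}\in K^{n+1}$ satisfy: for every $\vec s=(s_1,\dots,s_m)\in\{0,1\}^m$ the set $A_{\vec s}=\bigcup_{k=1}^m\{\vec a_{s_k,i}: i\in R_k\}$ is linearly independent, and every vector $\vec a_{s,i}$ ($s\in\{0,1\}$, $i\in\{1,\dots,n\}$) with $\vec a_{s,i}\notin A_{\vec s}$ is not in $\mathrm{span}(A_{\vec s})$. For $\vec s\in\{0,1\}^m$ let $\vec x_{\vec s}$ be the solution of the equations $\hat a_{s_k,i}=0$ for all $i\in R_k$, $k\in\{1,\dots,m\}$. If $\vec s\neq\vec r$, then $\vec x_{\vec s}\neq\vec x_{\vec r}$.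
   Context: For $\vec a\in K^{n+1}$, $\hat a$ denotes the affine-linear function $\hat a(x_1,\dots,x_n)=\vec a\cdot\vec x$ with $\vec x=(x_1,\dots,x_n,1)$. *)

From HB Require Import structures.
From mathcomp Require Import all_boot all_order all_algebra.
Set Implicit Arguments. Unset Strict Implicit. Unset Printing Implicit Defensive.
Import Order.TTheory GRing.Theory Num.Theory.
Local Open Scope ring_scope.

(* Vectors of K^{n+1} are row vectors 'rV[K]_(n.+1); the last coordinate
   (ord_max) is the constant coefficient.  A point of K^n is 'rV[K]_n. *)

Definition ahat (K : fieldType) (n : nat) (a : 'rV[K]_(n.+1)) (x : 'rV[K]_n) : K :=
  \sum_(j < n) a 0 (widen_ord (leqnSn n) j) * x 0 j + a 0 ord_max.

Definition family_lin_indep (K : fieldType) (n m : nat) (R : 'I_m -> {set 'I_n})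
  (a : bool -> 'I_n -> 'rV[K]_(n.+1)) (s : {ffun 'I_m -> bool}) : Prop :=
  forall c : 'I_n -> K,
    \sum_(k < m) \sum_(i in R k) c i *: a (s k) i = 0 -> forall i, c i = 0.

Definition in_span_family (K : fieldType) (n m : nat) (R : 'I_m -> {set 'I_n})
  (a : bool -> 'I_n -> 'rV[K]_(n.+1)) (s : {ffun 'I_m -> bool}) (v : 'rV[K]_(n.+1)) : Prop :=
  exists c : 'I_n -> K, v = \sum_(k < m) \sum_(i in R k) c i *: a (s k) i.

Definition solves (K : fieldType) (n m : nat) (R : 'I_m -> {set 'I_n})
  (a : bool -> 'I_n -> 'rV[K]_(n.+1)) (s : {ffun 'I_m -> bool}) (x : 'rV[K]_n) : Prop :=
  forall k : 'I_m, forall i, i \in R k -> ahat (a (s k) i) x = 0.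

From HB Require Import structures.
From mathcomp Require Import all_boot all_order all_algebra.
Set Implicit Arguments. Unset Strict Implicit. Unset Printing Implicit Defensive.
Import Order.TTheory GRing.Theory Num.Theory.
Local Open Scope ring_scope.

(* Suppose x_s = x_r = x and pick k with s_k != r_k and i in R_k.  The n
   independent vectors of A_s and the vector a_{r_k,i} all annihilate the
   nonzero vector (x, 1) of K^{n+1}, so together they span a space of
   dimension at most n; hence a_{r_k,i} already lies in span(A_s), which the
   hypotheses forbid. *)

Lemma mxrank_lt_of_mulmx_eq0 (F : fieldType) p q (M : 'M[F]_(p, q)) (v : 'cV_q) :
  v != 0 -> M *m v = 0 -> (\rank M < q)%N.
Proof.
move=> v0 Mv; rewrite ltnNge; apply: contra v0 => rkM.
have MTfree : row_free M^T by rewrite /row_free mxrank_tr eqn_leq rank_leq_col.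
by rewrite -trmx_eq0 -(mulmx_free_eq0 _ MTfree) -trmx_mul Mv trmx0.
Qed.

Lemma submx_of_common_kernel (F : fieldType) p q (B : 'M[F]_(p, q.+1))
    (u : 'rV_q.+1) (v : 'cV_q.+1) :
  \rank B = q -> v != 0 -> B *m v = 0 -> u *m v = 0 -> (u <= B)%MS.
Proof.
move=> rkB v0 Bv uv.
have rk_le : (\rank (B + u) <= \rank B)%N.
  rewrite rkB -ltnS addsmxE; apply: (mxrank_lt_of_mulmx_eq0 v0).
  by rewrite mul_col_mx Bv uv col_mx0.
move: rk_le; rewrite (geq_leqif (mxrank_leqif_sup (addsmxSl B u))).
by rewrite addsmx_sub submx_refl.
Qed.

Lemma disjoint_cover_index (I : finType) m (R : 'I_m -> {set I}) :
  (forall k l, k != l -> [disjoint R k & R l]) ->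
  \bigcup_(k < m) R k = [set: I] ->
  exists block : I -> 'I_m, forall i k, (i \in R k) = (block i == k).
Proof.
move=> Rdisj Rcov.
have /fin_all_exists[block blockR] : forall i, exists k, i \in R k.
  move=> i; have /bigcupP[k _ iRk] : i \in \bigcup_(k < m) R k by rewrite Rcov inE.
  by exists k.
exists block => i k; apply/idP/eqP => [iRk | <-//].
by apply/eqP; apply: contraLR iRk => /Rdisj /disjointFr /(_ (blockR i)) ->.
Qed.

Section HomogeneousCoordinates.
Variables (K : fieldType) (n : nat).

Definition homog (x : 'rV[K]_n) : 'cV[K]_n.+1 :=
  \col_j (if unlift ord_max j is Some j' then x 0 j' else 1).

Lemma homog_neq0 (x : 'rV[K]_n) : homog x != 0.
Proof.
apply/eqP => /matrixP /(_ ord_max 0) /eqP.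
by rewrite !mxE unlift_none oner_eq0.
Qed.

Lemma ahat_homog (a : 'rV[K]_n.+1) (x : 'rV[K]_n) : (a *m homog x) 0 0 = ahat a x.
Proof.
rewrite !mxE big_ord_recr /= !mxE unlift_none mulr1; congr (_ + _).
apply: eq_bigr => j _; rewrite !mxE.
suff -> : widen_ord (leqnSn n) j = lift ord_max j by rewrite liftK.
by apply/val_inj; rewrite /= /bump leqNgt ltn_ord.
Qed.

Lemma ahat_eq0 (a : 'rV[K]_n.+1) (x : 'rV[K]_n) :
  (a *m homog x = 0) <-> (ahat a x = 0).
Proof.
rewrite -ahat_homog; split => [-> | a0]; first by rewrite mxE.
by apply/rowP => j; rewrite ord1 a0 mxE.
Qed.

End HomogeneousCoordinates.

Section FamilyMatrix.
Variables (K : fieldType) (n m : nat) (R : 'I_m -> {set 'I_n}).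
Variables (a : bool -> 'I_n -> 'rV[K]_n.+1) (block : 'I_n -> 'I_m).
Hypothesis blockP : forall i k, (i \in R k) = (block i == k).

Definition family_mx (s : {ffun 'I_m -> bool}) : 'M[K]_(n, n.+1) :=
  \matrix_i a (s (block i)) i.

Lemma family_sumE (s : {ffun 'I_m -> bool}) (c : 'I_n -> K) :
  \sum_(k < m) \sum_(i in R k) c i *: a (s k) i = \row_i c i *m family_mx s.
Proof.
rewrite (exchange_big_dep xpredT) //= mulmx_sum_row.
apply: eq_bigr => i _; rewrite (big_pred1 (block i)) ?rowK ?mxE // => k.
by rewrite blockP eq_sym.
Qed.

Lemma family_mx_free (s : {ffun 'I_m -> bool}) :
  family_lin_indep R a s -> row_free (family_mx s).
Proof.
move=> indep; rewrite -kermx_eq0 -submx0; apply/row_subP => j.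
set w := row j _.
have /sub_kermxP wB0 : (w <= kermx (family_mx s))%MS by exact: row_sub.
have wE : \row_i w 0 i = w by apply/rowP => i; rewrite mxE.
have := indep (fun i => w 0 i); rewrite family_sumE wE => /(_ wB0) w_eq0.
by rewrite submx0; apply/eqP/rowP => i; rewrite w_eq0 mxE.
Qed.

Lemma in_span_family_submx (s : {ffun 'I_m -> bool}) (v : 'rV[K]_n.+1) :
  (v <= family_mx s)%MS -> in_span_family R a s v.
Proof.
case/submxP => w ->; exists (fun i => w 0 i); rewrite family_sumE.
by congr (_ *m _); apply/rowP => i; rewrite mxE.
Qed.

Lemma solves_family_mx (s : {ffun 'I_m -> bool}) (x : 'rV[K]_n) :
  solves R a s x -> family_mx s *m homog x = 0.
Proof.
move=> sol; apply/row_matrixP => i; rewrite row_mul rowK row0.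
by apply/ahat_eq0/sol; rewrite blockP.
Qed.

End FamilyMatrix.

Theorem lemma6 (K : fieldType) (n m : nat) (R : 'I_m -> {set 'I_n})
  (a : bool -> 'I_n -> 'rV[K]_(n.+1))
  (HRne : forall k, R k != set0)
  (HRdisj : forall k l, k != l -> [disjoint R k & R l])
  (HRcov : \bigcup_(k < m) R k = [set: 'I_n])
  (Hindep : forall s : {ffun 'I_m -> bool}, family_lin_indep R a s)
  (Hspan : forall (s : {ffun 'I_m -> bool}) (k : 'I_m) (i : 'I_n) (t : bool),
      i \in R k -> t != s k -> ~ in_span_family R a s (a t i))
  (s r : {ffun 'I_m -> bool}) (xs xr : 'rV[K]_n) :
  solves R a s xs -> solves R a r xr -> s != r -> xs != xr.
Proof.
move=> sol_s sol_r s_neq_r; apply/eqP => xs_eq_xr; subst xr.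
have [k sk_neq_rk] : exists k, s k != r k.
  apply/existsP; apply: contraR s_neq_r => /existsPn s_eq_r.
  by apply/eqP/ffunP => k; apply/eqP/negPn.
have [i iRk] := set0Pn _ (HRne k).
have [block blockP] := disjoint_cover_index HRdisj HRcov.
apply: (Hspan s k i (r k) iRk); first by rewrite eq_sym.
apply: (in_span_family_submx blockP).
apply: (submx_of_common_kernel _ (homog_neq0 xs)).
- by apply/eqP; exact: family_mx_free.
- exact: solves_family_mx.
- by apply/ahat_eq0/sol_r.
Qed.
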